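(* Let $p\ne17$ be an odd prime. Then $$\Big(\frac2p\Big)\sum_{k=0}^{[p/4]}\binom{4k}{2k}\frac1{272^k}\equiv\begin{cases}1\pmod p&\text{if }p\equiv\pm1,\pm4\pmod{17},\\-1\pmod p&\text{if }p\equiv\pm2,\pm8\pmod{17},\\ \frac14\pmod p&\text{if }p\equiv\pm6,\pm7\pmod{17},\\-\frac14\pmod p&\text{if }p\equiv\pm3,\pm5\pmod{17}.\end{cases}$$
   Context: $[x]$ is the greatest integer $\le x$; $(\frac2p)$ is the Legendre symbol. *)

From HB Require Import structures.
From mathcomp Require Import all_boot all_order all_algebra.
Set Implicit Arguments. Unset Strict Implicit. Unset Printing Implicit Defensive.
Import GRing.Theory.

Definition legendre (a p : nat) : int :=
  if (p %| a)%N then 0%R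
  else if [exists x : 'I_p, ((x * x) %% p == a %% p)%N] then 1%R
  else (-1)%R.

(* Let n = (p-1)/2 and F = F_p.  Since C(2m, m) = (-4)^m C(n, m) in F and
   (2/p) = 2^n (Euler's criterion), S = 2^n T with T = sum_k C(n, 2k) / 17^k,
   the even part of (1 + u)^n for any u with u^2 = 1/17.

   T is evaluated in an F-algebra containing a root z of the 17th cyclotomic
   polynomial, namely F[X] / (1 + X + ... + X^16).  The differences
   h = eta_0 - eta_2 and h' = eta_1 - eta_3 of the quartic Gauss periods satisfy
   h^2 + h'^2 = 17 and h h' = 2 g with g = h'^2 - h^2, hence g^2 = 17.  With
   u = g / 17 we get 1 + u = 2 h'^2 / 17 and 1 - u = 2 h^2 / 17, so that
   2 T 17^n = 2^n (h^(p-1) + h'^(p-1)).  The Frobenius x |-> x^p substitutes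
   z^(p mod 17) for z, which acts on (h, h') by a rotation (a, b) depending only
   on the coset of p mod 17 modulo the quartic residues.  Hence
   h^(p-1) + h'^(p-1) = (4a + b) / 2 and 17^n = a^2 - b^2 - 8ab, so that
   4 S = (4a + b)(a^2 - b^2 - 8ab); the four cosets give the four cases. *)
From HB Require Import structures.
From mathcomp Require Import all_boot all_order all_algebra.
From mathcomp Require Import finfield ring zify.
Import GRing.Theory.
Local Open Scope ring_scope.

Lemma mul_bin_central_succ m :
  (m.+1 * 'C(m.+1.*2, m.+1) = 2 * (m.*2).+1 * 'C(m.*2, m))%N.
Proof.
have e1 := mul_bin_diag (m.+1.*2) m; have e2 := mul_bin_down (m.*2).+1 m.
rewrite /= in e1 e2; nia.
Qed.

Definition corollary_sum (p : nat) : 'F_p :=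
  (legendre 2 p)%:~R *
  \sum_(0 <= k < (p %/ 4).+1) ('C(4 * k, 2 * k))%:R / (272%:R) ^+ k.

(* T = sum_(k <= n/2) C(n, 2k) / 17^k with n = (p-1)/2, the even part of
   (1 + u)^n for any u with u^2 = 1/17. *)
Definition half_binom_sum (p : nat) : 'F_p :=
  \sum_(k < p./2./2.+1) 'C(p./2, k.*2)%:R * (17%:R^-1) ^+ k.

Section PrimeField.
Variable p : nat.
Hypotheses (hp : prime p) (hodd : odd p).
Local Notation F := 'F_p.
Local Notation n := p./2.

Lemma half_oddE : (n.*2).+1 = p.
Proof. by rewrite -[RHS]odd_double_half hodd add1n. Qed.

Lemma natf_eq0 k : (k%:R == 0 :> F) = (p %| k)%N.
Proof. by rewrite (dvdn_pcharf (pchar_Fp hp)). Qed.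

Lemma natf_neq0 k : (0 < k < p)%N -> k%:R != 0 :> F.
Proof. by case/andP=> k0 kp; rewrite natf_eq0 gtnNdvd. Qed.

Lemma two_neq0 : (2 : F) != 0.
Proof. by apply: natf_neq0; have := prime_gt1 hp; have := half_oddE; lia. Qed.

Lemma bin_central_Fp m : (m <= n)%N -> 'C(m.*2, m)%:R = (-4) ^+ m * 'C(n, m)%:R :> F.
Proof.
elim: m => [|m IH] lt_mn; first by rewrite !bin0 expr0 mul1r.
have m1_nz : m.+1%:R != 0 :> F by apply: natf_neq0; have := half_oddE; lia.
apply: (mulfI m1_nz); rewrite -natrM mul_bin_central_succ mulrCA -natrM mul_bin_left.
rewrite !natrM (IH (ltnW lt_mn)) natrB ?(ltnW lt_mn) // exprS.
have odd_nat k : ((k.*2).+1%:R : F) = k%:R + k%:R + 1 by rewrite -natrD addnn natr1.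
have p0 : (n%:R + n%:R + 1 : F) = 0 by rewrite -odd_nat half_oddE pchar_Fp_0.
rewrite odd_nat.
transitivity (-4 * (-4) ^+ m * ((n%:R - m%:R) * 'C(n, m)%:R)
              + 2 * (-4) ^+ m * 'C(n, m)%:R * (n%:R + n%:R + 1) : F); first ring.
by rewrite p0 mulr0 addr0.
Qed.

Lemma fermat_half (x : F) : x != 0 -> x ^+ n.*2 = 1.
Proof.
move=> x_nz; apply: (mulIf x_nz); rewrite mul1r -exprSr half_oddE.
by have := expf_card x; rewrite card_Fp.
Qed.

Lemma sqr_natf_inj i j : (0 < i <= n)%N -> (0 < j <= n)%N ->
  i%:R ^+ 2 = j%:R ^+ 2 :> F -> i = j.
Proof.
move=> hi hj /eqP; rewrite -subr_eq0 subr_sqr mulf_eq0 -natrD.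
have [ip jp] : (i < p)%N /\ (j < p)%N by have := half_oddE; lia.
have ij_nz : (i + j)%:R != 0 :> F by apply: natf_neq0; lia.
rewrite (negPf ij_nz) orbF subr_eq0 => /eqP ij.
by rewrite -(modn_small ip) -(modn_small jp) -!(val_Fp_nat hp) ij.
Qed.

(* Euler's criterion for a non-residue: otherwise 'X^n - 1 would have the
   n + 1 distinct roots a, 1^2, ..., n^2. *)
Lemma nonresidue_half_pow (a : nat) :
  ~~ [exists x : 'I_p, (x * x %% p == a %% p)%N] -> (a%:R : F) ^+ n != 1.
Proof.
move=> non_res; apply/eqP=> a_n1.
have n_gt0 : (0 < n)%N by have := prime_gt1 hp; have := half_oddE; lia.
pose s := (a%:R : F) :: [seq i.+1%:R ^+ 2 | i <- iota 0 n].
have := @max_poly_roots _ ('X^n - 1) s.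
have size_s : size s = n.+1 by rewrite /= size_map size_iota.
rewrite -polyC1 size_XnsubC // size_s ltnn => roots_bound.
suff: false by []; apply: roots_bound.
- by rewrite -size_poly_gt0 size_XnsubC.
- apply/allP=> y; rewrite inE => /predU1P[->|/mapP[i i_lt_n ->]];
    rewrite rootE !hornerE ?a_n1 ?subrr //.
  rewrite -exprM mul2n fermat_half ?subrr //.
  by apply: natf_neq0; move: i_lt_n; rewrite mem_iota; have := half_oddE; lia.
rewrite /= map_inj_in_uniq ?iota_uniq ?andbT; last first.
  move=> i j; rewrite !mem_iota => hi hj /sqr_natf_inj ij.
  by apply/succn_inj/ij; lia.
apply/negP=> /mapP[i]; rewrite mem_iota => hi sq_a.
have i1_lt_p : (i.+1 < p)%N by have := half_oddE; lia.
move/negP: non_res; apply; apply/existsP; exists (Ordinal i1_lt_p).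
by rewrite -!(val_Fp_nat hp) natrM -expr2 sq_a.
Qed.

Lemma euler_criterion (a : nat) : (legendre a p)%:~R = (a%:R : F) ^+ n.
Proof.
have n_gt0 : (0 < n)%N by have := prime_gt1 hp; have := half_oddE; lia.
rewrite /legendre; case: ifP => [pa | p_a].
  by move: pa; rewrite -natf_eq0 => /eqP ->; rewrite expr0n gtn_eqF.
have a_nz : a%:R != 0 :> F by rewrite natf_eq0 p_a.
case: ifP => [/existsP[x /eqP sq_x] | non_res].
  have x_sq : (x%:R : F) ^+ 2 = a%:R by rewrite expr2 -natrM -Fp_nat_mod // sq_x Fp_nat_mod.
  have x_nz : x%:R != 0 :> F by apply: contra_neq a_nz; rewrite -x_sq => ->; rewrite expr0n.
  by rewrite -x_sq -exprM mul2n fermat_half.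
have : ((a%:R : F) ^+ n - 1) * (a%:R ^+ n + 1) = 0.
  by rewrite -subr_sqr -exprM muln2 fermat_half // expr1n subrr.
move/eqP; rewrite mulf_eq0 subr_eq0 (negPf (nonresidue_half_pow _ (negbT non_res))).
by rewrite addr_eq0 => /eqP ->.
Qed.

(* Reduction of the sum of the corollary, using C(4k, 2k) = 16^k C(n, 2k) and
   Euler's criterion (2/p) = 2^n. *)
Lemma corollary_sum_reduction : corollary_sum p = 2 ^+ n * half_binom_sum p.
Proof.
rewrite /corollary_sum euler_criterion; congr (_ * _).
have -> : (p %/ 4 = n./2)%N by rewrite -!divn2 -divnMA.
rewrite big_mkord; apply: eq_bigr => k _.
have k2_le_n : (k.*2 <= n)%N.
  by have := ltn_ord k; have := odd_double_half n; case: (odd n) => /=; lia.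
have -> : (4 * k = (k.*2).*2)%N by rewrite -!mul2n mulnA.
rewrite mul2n bin_central_Fp //.
have pow16 : (-4 : F) ^+ k.*2 = 2 ^+ 4 ^+ k by rewrite -mul2n exprM sqrrN -!natrX.
have e272 : (272%:R : F) = 2 ^+ 4 * 17%:R by rewrite -natrX -natrM.
rewrite pow16 e272 (exprMn _ (2 ^+ 4)) invfM exprVn [2 ^+ 4 ^+ k * _]mulrC -mulrA.
by rewrite mulVKf ?expf_neq0 ?two_neq0.
Qed.
End PrimeField.

Lemma sum_pairs (V : nmodType) (g : nat -> V) K :
  \sum_(i < K.*2) g i = \sum_(k < K) (g k.*2 + g k.*2.+1).
Proof.
elim: K => [|K IH]; first by rewrite !big_ord0.
by rewrite doubleS !big_ord_recr /= IH addrA.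
Qed.

Lemma binom_even_sum (R : comPzRingType) (u : R) m :
  (1 + u) ^+ m + (1 - u) ^+ m = 2 * \sum_(k < m./2.+1) 'C(m, k.*2)%:R * (u ^+ 2) ^+ k.
Proof.
have m_lt : (m < (m./2.+1).*2)%N by have := odd_double_half m; case: (odd m) => /=; lia.
pose g i := u ^+ i *+ 'C(m, i) + (- u) ^+ i *+ 'C(m, i).
have -> : (1 + u) ^+ m + (1 - u) ^+ m = \sum_(i < (m./2.+1).*2) g i.
  rewrite ![(1 + _)]addrC !exprD1n -big_split (big_ord_widen _ g m_lt) big_mkcond.
  apply: eq_bigr => i _; case: ltnP => // /bin_small Cm0.
  by rewrite /g Cm0 !mulr0n addr0.
rewrite sum_pairs mulr_sumr; apply: eq_bigr => k _.
have even_sign : (-1 : R) ^+ k.*2 = 1 by rewrite -mul2n exprM sqrrN !expr1n.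
rewrite /g !(exprNn u) [(-1) ^+ _.+1]exprS even_sign -exprM mul2n; ring.
Qed.

Definition cyclo17 {R : pzSemiRingType} (z : R) : R := \sum_(i < 17) z ^+ i.

(* The quartic residues mod 17 form the subgroup H = {1, 4, 13, 16} of (Z/17)^*,
   whose cosets are 3^j H for j = 0..3.  With eta_j the Gauss period
   sum_(e in 3^j H) z^e, we use the differences eta02 = eta_0 - eta_2 and
   eta13 = eta_1 - eta_3. *)
Definition eta02 {R : pzRingType} (z : R) : R :=
  z + z ^+ 4 + z ^+ 13 + z ^+ 16 - (z ^+ 2 + z ^+ 8 + z ^+ 9 + z ^+ 15).
Definition eta13 {R : pzRingType} (z : R) : R :=
  z ^+ 3 + z ^+ 5 + z ^+ 12 + z ^+ 14 - (z ^+ 6 + z ^+ 7 + z ^+ 10 + z ^+ 11).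

(* Substituting z^r for z maps eta02 + i eta13 to (a - b i) (eta02 + i eta13). *)
Definition rotates {R : pzRingType} (z : R) (r : nat) (a b : int) : Prop :=
  eta02 (z ^+ r) = a%:~R * eta02 z + b%:~R * eta13 z /\
  eta13 (z ^+ r) = a%:~R * eta13 z - b%:~R * eta02 z.

Section Periods.
Context {R : comPzRingType} {z : R}.
Hypothesis hz : cyclo17 z = 0.

Lemma cyclo17_exp17 : z ^+ 17 = 1.
Proof. by apply/eqP; rewrite -subr_eq0 subrX1 [\sum_(i < 17) _]hz mulr0. Qed.

Lemma expr_mod17 m : z ^+ m = z ^+ (m %% 17).
Proof. by rewrite (expr_mod _ cyclo17_exp17). Qed.

(* eta02^2 + eta13^2 = 17; the explicit quotient by cyclo17 is the certificate. *)
Lemma eta_sqr_sum : eta02 z ^+ 2 + eta13 z ^+ 2 = 17%:R.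
Proof.
apply/eqP; rewrite -subr_eq0; apply/eqP.
transitivity ((-17 + 17 * z + z ^+ 2 - 3 * z ^+ 3 + 3 * z ^+ 4 + z ^+ 5 - 3 * z ^+ 6
  + z ^+ 7 + 3 * z ^+ 8 - 7 * z ^+ 9 + 3 * z ^+ 10 + z ^+ 11 - 3 * z ^+ 12 + z ^+ 13
  + 3 * z ^+ 14 - 3 * z ^+ 15 + z ^+ 16) * cyclo17 z); last by rewrite hz mulr0.
by rewrite /cyclo17 !big_ord_recr big_ord0 /= /eta02 /eta13; ring.
Qed.

Lemma eta_mul : eta02 z * eta13 z = 2 * (eta13 z ^+ 2 - eta02 z ^+ 2).
Proof.
apply/eqP; rewrite -subr_eq0; apply/eqP.
transitivity ((2 * z ^+ 2 - 6 * z ^+ 3 + 7 * z ^+ 4 - 8 * z ^+ 6 + 4 * z ^+ 7 - z ^+ 8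
  + 4 * z ^+ 9 - z ^+ 10 + 4 * z ^+ 11 - 8 * z ^+ 12 + 7 * z ^+ 14 - 6 * z ^+ 15
  + 2 * z ^+ 16) * cyclo17 z); last by rewrite hz mulr0.
by rewrite /cyclo17 !big_ord_recr big_ord0 /= /eta02 /eta13; ring.
Qed.

(* The substitution z |-> z^r only depends on the coset of r modulo H; the four
   cosets H, 9H, 3H, 10H give the rotations a - b i = 1, -1, -i, i. *)
Lemma rotates_H r : r \in [:: 1; 16; 4; 13]%N -> rotates z r 1 0.
Proof.
by rewrite !inE => /or4P[] /eqP->; split;
  rewrite /eta02 /eta13 -!exprM !(expr_mod17 (_ * _)) /=; ring.
Qed.

Lemma rotates_9H r : r \in [:: 2; 15; 8; 9]%N -> rotates z r (-1) 0.
Proof.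
by rewrite !inE => /or4P[] /eqP->; split;
  rewrite /eta02 /eta13 -!exprM !(expr_mod17 (_ * _)) /=; ring.
Qed.

Lemma rotates_3H r : r \in [:: 3; 14; 5; 12]%N -> rotates z r 0 1.
Proof.
by rewrite !inE => /or4P[] /eqP->; split;
  rewrite /eta02 /eta13 -!exprM !(expr_mod17 (_ * _)) /=; ring.
Qed.

Lemma rotates_10H r : r \in [:: 6; 11; 7; 10]%N -> rotates z r 0 (-1).
Proof.
by rewrite !inE => /or4P[] /eqP->; split;
  rewrite /eta02 /eta13 -!exprM !(expr_mod17 (_ * _)) /=; ring.
Qed.

End Periods.

Lemma eta_exp_pchar {R : comNzRingType} {z : R} {q : nat} :
  cyclo17 z = 0 -> q \in [pchar R] ->
  eta02 z ^+ q = eta02 (z ^+ (q %% 17)) /\ eta13 z ^+ q = eta13 (z ^+ (q %% 17)).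
Proof.
move=> hz charR; rewrite -(expr_mod17 hz) -!(pFrobenius_autE charR).
by rewrite /eta02 /eta13 !rmorphB !rmorphD !rmorphXn.
Qed.

Section FrobeniusRotation.
(* R is an F_p-algebra (via c) containing a root z of cyclo17 on whose
   periods the p-th power acts as the rotation (a, b). *)
Variables (p : nat) (R : comUnitRingType) (c : {rmorphism 'F_p -> R}).
Variables (z : R) (a b : int).
Hypotheses (hp : prime p) (hodd : odd p) (h17 : p != 17%N).
Hypothesis hz : cyclo17 z = 0.
Hypothesis rot : rotates z (p %% 17) a b.

Local Notation n := p./2.
Local Notation h := (eta02 z).
Local Notation h' := (eta13 z).
Local Notation g := (eta13 z ^+ 2 - eta02 z ^+ 2).

Lemma natr_unit k : ~~ (p %| k)%N -> (k%:R : R) \is a GRing.unit.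
Proof. by move=> p_k; rewrite -(rmorph_nat c) rmorph_unit // unitfE natf_eq0. Qed.

Lemma unit17 : (17%:R : R) \is a GRing.unit.
Proof. by apply: natr_unit; rewrite dvdn_prime2. Qed.

Lemma eta_diff_sqr : g ^+ 2 = 17%:R.
Proof.
apply: (mulrI unit17).
have e : (h ^+ 2 + h' ^+ 2) ^+ 2 = g ^+ 2 + 4 * (h * h') ^+ 2 by ring.
rewrite eta_sqr_sum // eta_mul // in e.
by rewrite -[RHS]expr2 e; ring.
Qed.

Lemma unit_eta_diff : g \is a GRing.unit.
Proof. by rewrite -(unitrX_pos _ (isT : 0 < 2)%N) eta_diff_sqr unit17. Qed.

Lemma expr_half (x : R) : x ^+ n.*2 * x = x ^+ p.
Proof. by rewrite -exprSr half_oddE. Qed.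

Lemma eta_exp_p : h ^+ p = a%:~R * h + b%:~R * h' /\ h' ^+ p = a%:~R * h' - b%:~R * h.
Proof. have [-> ->] := eta_exp_pchar hz (rmorph_pchar c (pchar_Fp hp)); exact: rot. Qed.

(* h^(p-1) + h'^(p-1) = (4a + b) / 2, by the rotation and h h' = 2 g. *)
Lemma eta_half_sum : 2 * (h ^+ n.*2 + h' ^+ n.*2) = (4 * a + b)%:~R.
Proof.
have [hp_h hp_h'] := eta_exp_p.
apply: (mulrI unit_eta_diff).
transitivity ((h * h') * (h ^+ n.*2 + h' ^+ n.*2)); first by rewrite eta_mul //; ring.
transitivity (h' * (h ^+ n.*2 * h) + h * (h' ^+ n.*2 * h')); first ring.
rewrite !expr_half hp_h hp_h'.
transitivity (2 * a%:~R * (h * h') + b%:~R * g); first ring.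
by rewrite eta_mul //; ring.
Qed.

(* The Legendre symbol (17/p) = 17^((p-1)/2) = g^(p-1), read off from the
   action of the Frobenius on g = h'^2 - h^2: it equals a^2 - b^2 - 8ab. *)
Lemma pow17_half : (17%:R : R) ^+ n = (a ^+ 2 - b ^+ 2 - 8 * a * b)%:~R.
Proof.
have charR := rmorph_pchar c (pchar_Fp hp).
have [hp_h hp_h'] := eta_exp_p.
apply: (mulrI unit_eta_diff).
rewrite -{1}eta_diff_sqr -exprM mul2n mulrC expr_half.
rewrite -(pFrobenius_autE charR) pFrobenius_autB_comm; last exact: mulrC.
rewrite !pFrobenius_autX !pFrobenius_autE hp_h hp_h'.
transitivity ((a%:~R ^+ 2 - b%:~R ^+ 2) * g - 4 * a%:~R * b%:~R * (h * h')); first ring.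
by rewrite eta_mul //; ring.
Qed.

(* With u = g / 17 (so u^2 = 1/17): 2 T = (1 + u)^n + (1 - u)^n, and
   1 + u = 2 h'^2 / 17, 1 - u = 2 h^2 / 17. *)
Lemma half_binom_sum_eta :
  2 * c (half_binom_sum p) * 17%:R ^+ n = 2 ^+ n * (h ^+ n.*2 + h' ^+ n.*2).
Proof.
set u := g * 17%:R^-1.
have u_sqr : u ^+ 2 = 17%:R^-1 by rewrite exprMn eta_diff_sqr expr2 mulrA divrr ?mul1r // unit17.
have sum17 : (17%:R : R) + g = 2 * h' ^+ 2 by rewrite -(eta_sqr_sum hz); ring.
have dif17 : (17%:R : R) - g = 2 * h ^+ 2 by rewrite -(eta_sqr_sum hz); ring.
have add_u : 1 + u = 2 * h' ^+ 2 * 17%:R^-1 by rewrite -sum17 mulrDl mulrV ?unit17.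
have sub_u : 1 - u = 2 * h ^+ 2 * 17%:R^-1 by rewrite -dif17 mulrBl mulrV ?unit17.
have -> : 2 * c (half_binom_sum p) = (1 + u) ^+ n + (1 - u) ^+ n.
  rewrite binom_even_sum /half_binom_sum rmorph_sum; congr (2 * _).
  by apply: eq_bigr => k _; rewrite rmorphM rmorphXn fmorphV !rmorph_nat u_sqr.
rewrite add_u sub_u !exprMn -addnn !exprD; set k := 17%:R^-1.
transitivity (2 ^+ n * (h ^+ n * h ^+ n + h' ^+ n * h' ^+ n) * (k ^+ n * 17%:R ^+ n));
  first ring.
by rewrite -(exprMn _ k) /k mulVr ?unit17 // expr1n mulr1.
Qed.

(* Transfer back to F_p (c is injective, F_p being a field). *)
Lemma half_binom_sum_rotation :
  4 * half_binom_sum p * 17%:R ^+ n = 2 ^+ n * (4 * a + b)%:~R /\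
  (17%:R : 'F_p) ^+ n = (a ^+ 2 - b ^+ 2 - 8 * a * b)%:~R.
Proof.
split; apply: (fmorph_inj c); last by rewrite rmorphXn rmorph_nat rmorph_int pow17_half.
rewrite !rmorphM !rmorphXn !rmorph_nat rmorph_int.
transitivity (2 * (2 * c (half_binom_sum p) * 17%:R ^+ n)); first ring.
by rewrite half_binom_sum_eta -eta_half_sum; ring.
Qed.

Lemma corollary_sum_of_rotation :
  4 * corollary_sum p = ((4 * a + b) * (a ^+ 2 - b ^+ 2 - 8 * a * b))%:~R.
Proof.
have [eT e17] := half_binom_sum_rotation.
have sq2 : (2 : 'F_p) ^+ n * 2 ^+ n = 1 by rewrite -exprD addnn fermat_half ?two_neq0.
have sq17 : (17%:R : 'F_p) ^+ n * 17%:R ^+ n = 1.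
  by rewrite -exprD addnn fermat_half // natf_eq0 // dvdn_prime2.
rewrite corollary_sum_reduction // intrM -e17.
transitivity (4 * (2 ^+ n * half_binom_sum p) * (17%:R ^+ n * 17%:R ^+ n)).
  by rewrite sq17 mulr1.
transitivity (2 ^+ n * (4 * half_binom_sum p * 17%:R ^+ n) * 17%:R ^+ n); first ring.
by rewrite eT mulrA sq2 mul1r.
Qed.
End FrobeniusRotation.

(* The quotient ring F_p[X] / (1 + X + ... + X^16) is a commutative F_p-algebra
   (via constant polynomials) in which the class of X is a root of cyclo17. *)
Definition cyclo17_poly (p : nat) : {poly 'F_p} := \poly_(i < 17) 1.

Lemma cyclo17_qX p : cyclo17 ('qX : {poly %/ cyclo17_poly p}) = 0.
Proof.
have monic_cyclo : cyclo17_poly p \is monic by rewrite monicE lead_coef_poly // oner_neq0.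
have size_cyclo : size (cyclo17_poly p) = 17%N by rewrite size_poly_eq // oner_neq0.
have cycloE : cyclo17_poly p = cyclo17 'X.
  by rewrite /cyclo17_poly poly_def; apply: eq_bigr => i _; rewrite scale1r.
have -> : cyclo17 ('qX : {poly %/ cyclo17_poly p}) = in_qpoly (cyclo17_poly p) (cyclo17 'X).
  by rewrite rmorph_sum; apply: eq_bigr => i _; rewrite rmorphXn.
rewrite -cycloE.
apply: val_inj; rewrite /= /mk_monic size_cyclo monic_cyclo /=.
by apply: Pdiv.CommonRing.rmodpp; apply: mulrC.
Qed.

Theorem corollary2p8 (p : nat) (hp : prime p) (hodd : odd p) (h17 : p != 17%N) :
  let S : 'F_p :=
    (legendre 2 p)%:~R *
    \sum_(0 <= k < (p %/ 4).+1) ('C(4 * k, 2 * k))%:R / (272%:R) ^+ k in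
  let r := (p %% 17)%N in
  (r \in [:: 1; 16; 4; 13]%N -> S = 1) /\
  (r \in [:: 2; 15; 8; 9]%N -> S = -1) /\
  (r \in [:: 6; 11; 7; 10]%N -> S = 4^-1) /\
  (r \in [:: 3; 14; 5; 12]%N -> S = - 4^-1).
Proof.
move=> S r.
have hz := cyclo17_qX p.
have four_nz : (4 : 'F_p) != 0 by rewrite (_ : 4 = 2 * 2) ?mulf_neq0 ?two_neq0 // -natrM.
have class_sum a b : rotates ('qX : {poly %/ cyclo17_poly p}) r a b ->
    4 * S = ((4 * a + b) * (a ^+ 2 - b ^+ 2 - 8 * a * b))%:~R.
  exact: (@corollary_sum_of_rotation p _ (qpolyC _) _ a b hp hodd h17 hz).
split; [|split; [|split]].
- by move=> /(rotates_H hz) /class_sum eS; apply: (mulfI four_nz); rewrite eS; field.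
- by move=> /(rotates_9H hz) /class_sum eS; apply: (mulfI four_nz); rewrite eS; field.
- by move=> /(rotates_10H hz) /class_sum eS; apply: (mulfI four_nz); rewrite eS; field.
- by move=> /(rotates_3H hz) /class_sum eS; apply: (mulfI four_nz); rewrite eS; field.
Qed.
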